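(* Let $0<p<q<\infty$. Then there does not exist any continuous map $\tau:\mathbb{R}\to\mathbb{R}$ such that for some constant $C>0$, \[ |\tau^{-1}(E)|^{1/q}\le C|E|^{1/p} \] for all Lebesgue measurable sets $E\subset\mathbb{R}$.
   Context: $|\cdot|$ denotes Lebesgue measure on $\mathbb{R}$. *)

From mathcomp Require Import all_boot all_order all_algebra.
From mathcomp Require Import all_classical all_reals all_analysis.
Set Implicit Arguments. Unset Strict Implicit. Unset Printing Implicit Defensive.
Import Order.TTheory GRing.Theory Num.Theory.
Local Open Scope classical_set_scope.
Local Open Scope ring_scope.

(* This is the sigma-algebra of the completed Lebesgue measure
   (cf. lemma completed_caratheodory_measurable). *)
Definition lebesgue_measurable (R : realType) (E : set R) : Prop :=
  ((@wlength R idfun)^*)%mu.-cara.-measurable E.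

(* |A| : Lebesgue (outer) measure of an arbitrary set A ⊆ R; equals the
   Lebesgue measure on Lebesgue measurable sets. *)
Definition leb (R : realType) (A : set R) : \bar R :=
  @completed_lebesgue_measure R A.

From mathcomp Require Import all_boot all_order all_algebra.
From mathcomp Require Import all_classical all_reals all_analysis.
From mathcomp Require Import lra.
Import Order.TTheory GRing.Theory Num.Theory.
Import numFieldNormedType.Exports.
Local Open Scope classical_set_scope.
Local Open Scope ring_scope.

(* If |tau^-1(E)| <= C^q |E|^(q/p) for all E, then cutting an interval of
   length 1 into n pieces of length 1/n and using subadditivity gives
   |tau^-1(]b, b + 1])| <= n C^q n^(-q/p) = C^q n^(1 - q/p), which tends to 0
   because q > p.  So every unit interval has a null preimage; but by
   continuity the preimage of a unit interval around tau 0 contains a ball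
   around 0. *)

Section lebesgue_outer_measure.
Context {R : realType}.
Implicit Types A B : set R.

Lemma lebE A : leb A = lebesgue_measure A.
Proof. by []. Qed.

Lemma leb_ge0 A : (0 <= leb A)%E.
Proof. exact: (@mu_ext_ge0 _ _ _ (@wlength R idfun)). Qed.

Lemma le_leb {A B} : A `<=` B -> (leb A <= leb B)%E.
Proof. exact: (le_mu_ext (@wlength R idfun)). Qed.

Lemma lebU2 A B : (leb (A `|` B) <= leb A + leb B)%E.
Proof. exact: outer_measureU2. Qed.

Lemma measurable_lebesgue_measurable {A} : measurable A -> lebesgue_measurable A.
Proof. exact: sub_caratheodory. Qed.

Lemma leb_itvoc (a h : R) : 0 < h -> leb `]a, a + h] = h%:E.
Proof.
move=> h_gt0; rewrite lebE lebesgue_measure_itv /= lte_fin ltrDl h_gt0.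
by rewrite -EFinD addrC addKr.
Qed.

Lemma leb_ball (x d : R) : 0 < d -> leb (ball x d) = (d *+ 2)%:E.
Proof. by move=> d_gt0; rewrite lebE lebesgue_measure_ball // ltW. Qed.

End lebesgue_outer_measure.

Lemma poweRV_le_EFin {R : realType} [x : \bar R] [y q : R] : 0 < q ->
  (0 <= x)%E -> (x `^ q^-1 <= y%:E)%E -> (x <= (y `^ q)%:E)%E.
Proof.
move=> q_gt0 x_ge0 xy.
have y_ge0 : 0 <= y by rewrite -lee_fin (le_trans _ xy) ?poweR_ge0.
have -> : x = ((x `^ q^-1) `^ q)%E by rewrite -poweRrM mulVf ?gt_eqF ?poweRe1.
rewrite -poweR_EFin; apply: gt0_ler_poweR => //; first exact: ltW.
- by rewrite in_itv /= poweR_ge0 leey.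
- by rewrite in_itv /= lee_fin y_ge0 leey.
Qed.

Lemma itvoc_split {R : realType} (a b c : R) :
  `]a, c] `<=` `]a, b] `|` `]b, c].
Proof.
move=> x /=; rewrite !in_itv /= => /andP[ax xc].
by have [_|_] := leP x b; [left; rewrite ax | right; rewrite xc].
Qed.

Lemma leb_preimage_itvoc_le_mul {R : realType} [f : R -> R] [h M : R] :
  (forall b, (leb (f @^-1` `]b, (b + h)%R]) <= M%:E)%E) ->
  forall b (n : nat), (leb (f @^-1` `]b, (b + n%:R * h)%R]) <= (n%:R * M)%:E)%E.
Proof.
move=> M_bound b; elim=> [|n IHn].
  by rewrite mul0r addr0 mul0r set_itvoc0 preimage_set0 lebE measure0.
have -> : b + n.+1%:R * h = b + n%:R * h + h by rewrite -natr1 mulrDl mul1r addrA.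
rewrite -natr1 mulrDl mul1r EFinD.
apply: le_trans (le_trans (lebU2 _ _) (leeD IHn (M_bound _))).
by apply: le_leb; rewrite -preimage_setU; apply: preimage_subset; apply: itvoc_split.
Qed.

Lemma exists_invn_powR_lt {R : realType} [s e : R] : 0 < s -> 0 < e ->
  exists n : nat, (n.+1%:R^-1) `^ s < e.
Proof.
move=> s_gt0 e_gt0; set r := e `^ s^-1; exists (Num.trunc r^-1).
have r_gt0 : 0 < r by rewrite powR_gt0.
have -> : e = r `^ s by rewrite -powRrM mulVf ?gt_eqF ?powRr1 ?ltW.
apply: gt0_ltr_powR; rewrite ?nnegrE ?invr_ge0 ?ltW //.
by rewrite -[r in _ < r]invrK ltf_pV2 ?posrE ?invr_gt0 ?truncnS_gt.
Qed.

Section pullback_estimate.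
Context {R : realType} {tau : R -> R} {p q C : R}.
Hypotheses (p_gt0 : 0 < p) (p_lt_q : p < q) (C_gt0 : 0 < C).
Hypothesis tau_pullback : forall E : set R, lebesgue_measurable E ->
  (poweR (leb (tau @^-1` E)) q^-1 <= C%:E * poweR (leb E) p^-1)%E.

Let q_gt0 : 0 < q. Proof. exact: lt_trans p_lt_q. Qed.

Lemma leb_preimage_itvoc_le [h : R] : 0 < h -> forall b : R,
  (leb (tau @^-1` `]b, (b + h)%R]) <= (C `^ q * h `^ (q / p))%:E)%E.
Proof.
move=> h_gt0 b.
have := tau_pullback _ (measurable_lebesgue_measurable (measurable_itv `]b, b + h])).
rewrite leb_itvoc // poweR_EFin -EFinM => /(poweRV_le_EFin q_gt0 (leb_ge0 _)).
by rewrite powRM ?powR_ge0 ?(ltW C_gt0) // -powRrM (mulrC p^-1).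
Qed.

Lemma leb_preimage_unit_itvoc (b : R) : leb (tau @^-1` `]b, (b + 1)%R]) = 0%E.
Proof.
apply/eqP; rewrite eq_le leb_ge0 andbT; apply/lee_addgt0Pr => e e_gt0.
have s_gt0 : 0 < q / p - 1 by rewrite subr_gt0 ltr_pdivlMr // mul1r.
have [n hn_lt] := exists_invn_powR_lt s_gt0 (divr_gt0 e_gt0 (powR_gt0 q C_gt0)).
set h : R := n.+1%:R^-1 in hn_lt.
have h_gt0 : 0 < h by rewrite invr_gt0.
have nh1 : n.+1%:R * h = 1 by rewrite mulfV.
have := leb_preimage_itvoc_le_mul (leb_preimage_itvoc_le h_gt0) b n.+1.
rewrite nh1 add0e => /le_trans; apply; rewrite lee_fin.
have -> : n.+1%:R * (C `^ q * h `^ (q / p)) = C `^ q * h `^ (q / p - 1).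
  rewrite powRB ?(gt_eqF h_gt0) ?implybT // powRr1 ?(ltW h_gt0) //.
  by rewrite /h invrK mulrCA [_ * n.+1%:R]mulrC.
by rewrite ltW // -ltr_pdivlMl ?powR_gt0 // [_ * e]mulrC.
Qed.

End pullback_estimate.

Theorem proposition5p1 (R : realType) (p q : R) :
  0 < p -> p < q ->
  ~ (exists (tau : R -> R) (C : R),
       continuous tau /\ 0 < C /\
       forall E : set R, lebesgue_measurable E ->
         (poweR (leb (tau @^-1` E)) q^-1 <= C%:E * poweR (leb E) p^-1)%E).
Proof.
move=> p_gt0 p_lt_q [tau [C [tau_cont [C_gt0 tau_pullback]]]].
have [d d_gt0 tau_ball] :
    exists2 d : R, 0 < d & ball 0 d `<=` tau @^-1` ball (tau 0) 2^-1.
  by apply/nbhs_ballP; apply: tau_cont; apply: nbhsx_ballx; rewrite invr_gt0.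
set a := tau 0 - 2^-1.
have ball_sub : ball (tau 0) 2^-1 `<=` `]a, (a + 1)%R].
  move=> y; rewrite ball_itv /= !in_itv /= => /andP[ay ya].
  by rewrite ay /a -addrA ltW // (lt_le_trans ya) // lerD2l; lra.
have := le_leb (subset_trans tau_ball (preimage_subset ball_sub)).
rewrite leb_ball // (leb_preimage_unit_itvoc p_gt0 p_lt_q C_gt0 tau_pullback).
by rewrite lee_fin leNgt mulrn_wgt0.
Qed.
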